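(* Let $x \geq 1$ and $m \geq 2$ be integers. Let $\mathcal{C}_{m,x}$ be the set of binary words of length $m$ containing no pattern from $\mathcal{T}_x = \{0\mathbf{1}^y0,\ 1\mathbf{0}^y1 : 1\le y\le x\}$ as a contiguous substring, listed in increasing lexicographic order, and for $\mathbf{c} = [c_{m-1}\, c_{m-2} \dots c_0] \in \mathcal{C}_{m,x}$ (with $c_{m-1}$ the leftmost bit) let $g(\mathbf{c}) \in \{0,\dots,|\mathcal{C}_{m,x}|-1\}$ be its position in this list. Let $N(k,x) = |\mathcal{C}_{k,x}|$ for $k\ge 1$ and $N(k,x) \triangleq 2$ for all integers $k \le 1$. Then: if $c_{m-1}=0$, $$g(\mathbf{c}) = \frac12 \sum_{\substack{0\le i\le m-2\\ c_i=1}} N(i-x+1,x);$$ if $c_{m-1}=1$, $$g(\mathbf{c}) = \frac12\Big[N(m,x) + \sum_{\substack{0\le i\le m-2\\ c_i=1}} N(i-x+1,x)\Big].$$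
   Context: $\mathbf{0}^r$ (resp. $\mathbf{1}^r$) denotes a run of $r$ consecutive $0$'s (resp. $1$'s). Lexicographic order on binary words of a fixed length is the order as binary numbers with the leftmost bit most significant; positions are counted from $0$. *)

From mathcomp Require Import all_boot all_order all_algebra.
Set Implicit Arguments. Unset Strict Implicit. Unset Printing Implicit Defensive.
Import Order.TTheory GRing.Theory Num.Theory.

(* Binary words are written left to right as sequences of bools
   (false = 0, true = 1); a word of length m is [c_{m-1} ... c_0]. *)

Definition pat01 (y : nat) : seq bool := false :: rcons (nseq y true) false.
Definition pat10 (y : nat) : seq bool := true :: rcons (nseq y false) true.

Definition avoids (x : nat) (w : seq bool) : bool :=
  [forall y : 'I_x.+1, (0 < y)%N ==>
     ~~ infix (pat01 y) w && ~~ infix (pat10 y) w].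

Definition Cset (m x : nat) : {set m.-tuple bool} :=
  [set t : m.-tuple bool | avoids x t].

Definition bval (w : seq bool) : nat := foldl (fun acc (b : bool) => acc.*2 + b) 0 w.

(* position of c in the lexicographic (= numeric) listing of C_{m,x} *)
Definition gpos (m x : nat) (c : m.-tuple bool) : nat :=
  #|[set t in Cset m x | (bval t < bval c)%N]|.

Definition Ncount (k : int) (x : nat) : nat :=
  if (k <= 1)%R then 2 else #|Cset `|k|%N x|.

Definition bit (m : nat) (c : m.-tuple bool) (i : nat) : bool :=
  nth false c (m.-1 - i).

(* Split the admissible words below c = b :: c' according to their first
   letter.  Complementation is a bijection of C_{k,x}, so each first letter
   accounts for N(k,x)/2 words; this is the contribution when b = 1.  The
   remaining words are b :: u with u admissible, u < c' and b :: u admissible.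
   Now b :: u fails to be admissible exactly when u begins with a run of at
   most x letters ~b closed by b, and since c' is not of this form all such u
   lie below c' if its first letter is 1 and above it otherwise.  Among the
   admissible words of length k beginning with ~b, those whose leading run is
   longer than x are in bijection with the admissible words of length k - x
   beginning with ~b (shorten the run), so N(k,x)/2 - N(k-x,x)/2 words u are
   excluded, and induction on the length gives the formula. *)

From mathcomp Require Import all_boot all_order all_algebra.
From mathcomp Require Import zify.
Set Implicit Arguments. Unset Strict Implicit. Unset Printing Implicit Defensive.

Lemma count_andb_split T (P Q : pred T) s :
  count (fun t => P t && Q t) s + count (fun t => P t && ~~ Q t) s = count P s.
Proof. by elim: s => //= t s <-; case: (P t); case: (Q t) => /=; lia. Qed.

Lemma count_andb_const T (P : pred T) (c : bool) s :
  count (fun t => P t && c) s = c * count P s.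
Proof.
case: c; rewrite ?mul1n ?mul0n; first by apply: eq_count => t; rewrite andbT.
by rewrite (eq_count (a2 := pred0)) ?count_pred0 // => t; rewrite andbF.
Qed.

Section InjectiveMap.
Variables (T U : eqType) (f : T -> U).
Hypothesis f_inj : injective f.

Lemma prefix_map_inj s1 s2 : prefix (map f s1) (map f s2) = prefix s1 s2.
Proof. by elim: s2 s1 => [|y s2 IHs] [|z s1] //=; rewrite inj_eq // IHs. Qed.

Lemma infix_map_inj s1 s2 : infix (map f s1) (map f s2) = infix s1 s2.
Proof.
elim: s2 => [|y s2 IHs]; first by case: s1.
by rewrite map_cons !infix_consl IHs -map_cons prefix_map_inj.
Qed.

End InjectiveMap.

Fixpoint words (n : nat) : seq (seq bool) :=
  if n is n'.+1 then map (cons false) (words n') ++ map (cons true) (words n')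
  else [:: [::]].

Lemma mem_words n w : (w \in words n) = (size w == n).
Proof.
have mem_cons b h v W : (h :: v \in map (cons b) W) = (h == b) && (v \in W).
  by apply/mapP/andP => [[u u_W [-> ->]] | [/eqP -> v_W]]; last exists v.
elim: n w => [|n IHn] [|h w] //=.
  by rewrite mem_cat; apply/norP; split; apply/mapP => -[].
by rewrite mem_cat !mem_cons IHn eqSS; case: h; rewrite ?orbF.
Qed.

Lemma uniq_words n : uniq (words n).
Proof.
elim: n => //= n IHn; rewrite cat_uniq !map_inj_uniq //=; try by move=> u v [].
by rewrite IHn andbT; apply/hasPn => _ /mapP [u _ ->]; apply/mapP => -[].
Qed.

Lemma count_wordsS (P : pred (seq bool)) n b :
  count P (words n.+1) =
  count (fun u => P (b :: u)) (words n) + count (fun u => P (~~ b :: u)) (words n).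
Proof. by rewrite count_cat !count_map; case: b => //; rewrite addnC. Qed.

Lemma card_tuples_count n (A : {set n.-tuple bool}) (P : pred (seq bool)) :
  (forall t, (t \in A) = P t) -> #|A| = count P (words n).
Proof.
move=> memA; rewrite cardE /enum_mem size_filter -enumT (eq_count memA) -count_map.
apply/permP/uniq_perm; rewrite ?uniq_words ?(map_inj_uniq val_inj) ?enum_uniq //.
move=> w; rewrite mem_words; apply/mapP/eqP => [[t _ ->] | w_n]; first exact: size_tuple.
by exists (Tuple (introT eqP w_n)); rewrite ?mem_enum.
Qed.

Lemma count_words_negb (P : pred (seq bool)) n :
  count (fun u => P (map negb u)) (words n) = count P (words n).
Proof.
elim: n P => // n IHn P.
rewrite (count_wordsS _ _ false) (count_wordsS P _ true) /=.
by rewrite (IHn (fun v => P (true :: v))) (IHn (fun v => P (false :: v))) addnC.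
Qed.

Lemma bval_cons (h : bool) w : bval (h :: w) = h * 2 ^ size w + bval w.
Proof.
have foldl_acc acc v :
    foldl (fun acc (b : bool) => acc.*2 + b) acc v = acc * 2 ^ size v + bval v.
  rewrite /bval; elim: v acc => [|b v IHv] acc /=; first by rewrite muln1 addn0.
  by rewrite IHv [in RHS]IHv expnS -!muln2; case: b => /=; lia.
by rewrite /bval /= foldl_acc.
Qed.

Lemma bval_lt w : bval w < 2 ^ size w.
Proof. by elim: w => //= h w IHw; rewrite bval_cons expnS; case: h => /=; lia. Qed.

Lemma ltn_bval_cons (h h' : bool) w w' : size w = size w' ->
  (bval (h :: w) < bval (h' :: w')) = (h < h') || (h == h') && (bval w < bval w').
Proof.
move=> eq_size; rewrite !bval_cons eq_size.
have := bval_lt w; have := bval_lt w'; rewrite eq_size.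
by case: h; case: h' => /=; lia.
Qed.

Definition short_lead (b : bool) (k : nat) (w : seq bool) : bool :=
  has (fun y => prefix (rcons (nseq y (~~ b)) b) w) (iota 0 k).

(* [b :: w] begins with a pattern [b (~~ b)^y b] of T_x, [1 <= y <= x]. *)
Definition starts_forbidden (x : nat) (b : bool) (w : seq bool) : bool :=
  if w is h :: u then (h == ~~ b) && short_lead b x u else false.

Lemma short_lead_nil b k : short_lead b k [::] = false.
Proof.
by apply/hasPn => y _; rewrite prefixs0 -size_eq0 size_rcons.
Qed.

Lemma short_lead_cons b k h u :
  short_lead b k.+1 (h :: u) = (h == b) || short_lead b k u.
Proof.
rewrite /short_lead /= -add1n iotaDl has_map prefix0s andbT eq_sym.
case: eqP => [//| /eqP h_b] /=; have -> : h = ~~ b by case: b h h_b => -[].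
by apply: eq_has => y; rewrite /= eqxx.
Qed.

Lemma avoidsE x w :
  avoids x w = all (fun y => ~~ infix (pat01 y) w && ~~ infix (pat10 y) w) (iota 1 x).
Proof.
apply/forallP/allP => avoid_w y.
  rewrite mem_iota add1n => /andP [y_gt0 y_le].
  by have /implyP := avoid_w (Ordinal (y_le : y < x.+1)); apply.
by apply/implyP => y_gt0; apply: avoid_w; rewrite mem_iota y_gt0 add1n ltn_ord.
Qed.

Lemma avoids_cons x b w : avoids x (b :: w) = avoids x w && ~~ starts_forbidden x b w.
Proof.
have infix_pats y : ~~ infix (pat01 y) (b :: w) && ~~ infix (pat10 y) (b :: w) =
    (~~ infix (pat01 y) w && ~~ infix (pat10 y) w) && ~~ prefix (rcons (nseq y (~~ b)) b) w.
  rewrite !infix_consl !negb_or andbACA andbC; congr andb.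
  by case: b; rewrite /= ?andbT.
have -> : starts_forbidden x b w =
           has (fun y => prefix (rcons (nseq y (~~ b)) b) w) (iota 1 x).
  case: w {infix_pats} => [|h u]; rewrite /starts_forbidden.
    by apply/esym/hasPn => y _; rewrite prefixs0 -size_eq0 size_rcons.
  rewrite -add1n iotaDl has_map; case: eqP => [-> | /eqP h_b] /=.
    by apply: eq_has => y; rewrite /= eqxx.
  by apply/esym/hasPn => y _ /=; rewrite eq_sym (negbTE h_b).
by rewrite !avoidsE -all_predC -all_predI; apply: eq_all => y; apply: infix_pats.
Qed.

Lemma avoids_nil x : avoids x [::].
Proof. by rewrite avoidsE; apply/allP. Qed.

Lemma avoids_cons2 x b w : avoids x (b :: b :: w) = avoids x (b :: w).
Proof. by rewrite [LHS]avoids_cons /=; case: b; rewrite andbT. Qed.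

Lemma avoids_negb x w : avoids x (map negb w) = avoids x w.
Proof.
have negb_inj : injective negb by exact: can_inj negbK.
rewrite !avoidsE; apply: eq_all => y.
have neg_pat01 : map negb (pat01 y) = pat10 y by rewrite /= map_rcons map_nseq.
have neg_pat10 : map negb (pat10 y) = pat01 y by rewrite /= map_rcons map_nseq.
rewrite -[in RHS](infix_map_inj negb_inj (pat01 y)).
by rewrite -[in RHS](infix_map_inj negb_inj (pat10 y)) neg_pat01 neg_pat10 andbC.
Qed.

(* Half of N(k,x), by the symmetry 0 <-> 1; for k <= 1 it is 1, matching the
   convention N(k,x) = 2. *)
Definition halfN (x k : nat) : nat := count (fun u => avoids x (false :: u)) (words k.-1).

Lemma count_avoids_cons x b n :
  count (fun u => avoids x (b :: u)) (words n) = halfN x n.+1.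
Proof.
case: b => //; rewrite /halfN /= -count_words_negb.
by apply: eq_count => u; rewrite -[RHS]avoids_negb.
Qed.

Lemma halfN_le1 x k : k <= 1 -> halfN x k = 1.
Proof.
by case: k => [|[|]] // _; rewrite /halfN /= avoids_cons avoids_nil.
Qed.

Lemma card_Cset x n : #|Cset n.+1 x| = 2 * halfN x n.+1.
Proof.
rewrite (card_tuples_count (P := avoids x)) => [|t]; last by rewrite inE.
by rewrite (count_wordsS _ _ false) !count_avoids_cons addnn mul2n.
Qed.

Lemma count_long_lead x b k n :
  count (fun u => avoids x (~~ b :: u) && ~~ short_lead b k u) (words n) = halfN x (n.+1 - k).
Proof.
elim: k n => [|k IHk] n.
  by rewrite subn0 -(count_avoids_cons x (~~ b)); apply: eq_count => u; rewrite andbT.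
case: n => [|n].
  by rewrite /= short_lead_nil avoids_cons avoids_nil halfN_le1.
have negb_neq : (~~ b == b) = false by case: (b).
rewrite (count_wordsS _ _ b) (eq_count (a2 := pred0)) => [|u]; last first.
  by rewrite short_lead_cons eqxx andbF.
rewrite count_pred0 add0n subSS -IHk; apply: eq_count => u.
by rewrite avoids_cons2 short_lead_cons negb_neq.
Qed.

Lemma count_starts_forbidden x b n :
  count (fun u => avoids x u && starts_forbidden x b u) (words n) + halfN x (n - x) =
  halfN x n.
Proof.
case: n => [|n]; first by rewrite sub0n /= andbF.
rewrite (count_wordsS _ _ b) (eq_count (a2 := pred0)) => [|u]; last first.
  by case: b; rewrite /= andbF.
rewrite count_pred0 add0n -(count_long_lead x b x n) -(count_avoids_cons x (~~ b)).
rewrite -(count_andb_split (fun u => avoids x (~~ b :: u)) (short_lead b x)).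
by congr (_ + _); apply: eq_count => u /=; rewrite eqxx.
Qed.

Lemma ltn_bval_short_lead b k t c : size t = size c ->
  short_lead b k t -> ~~ short_lead b k c -> (bval t < bval c) = ~~ b.
Proof.
elim: k t c => [|k IHk] [|h t] [|h' c] //; rewrite ?short_lead_nil // => -[eq_size].
rewrite !short_lead_cons negb_or ltn_bval_cons // => lead_t /andP [h'_b lead_c].
have -> : h' = ~~ b by case: h' h'_b; case: (b).
case: (eqVneq h b) lead_t => [-> _ | h_b /= lead_t]; first by case: (b).
have -> : h = ~~ b by case: h h_b; case: (b).
by rewrite ltnn eqxx IHk.
Qed.

Lemma ltn_bval_starts_forbidden x b t c : size t = size c ->
  starts_forbidden x b t -> ~~ starts_forbidden x b c -> (bval t < bval c) = head false c.
Proof.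
case: t c => [|h t] [|h' c] //= [eq_size] /andP [/eqP -> lead_t].
rewrite ltn_bval_cons //; case: (eqVneq h' (~~ b)) => [-> | h'_b].
  by rewrite ltnn /= => lead_c; apply: ltn_bval_short_lead lead_c.
have -> : h' = b by case: h' h'_b; case: (b).
by case: (b).
Qed.

Definition rank (x : nat) (c : seq bool) : nat :=
  count (fun t => avoids x t && (bval t < bval c)) (words (size c)).

Definition seqbit (c : seq bool) (i : nat) : bool := nth false c ((size c).-1 - i).

Definition rank_sum (x : nat) (c : seq bool) : nat :=
  \sum_(0 <= i < (size c).-1 | seqbit c i) halfN x (i.+1 - x).

Lemma rank_cons x b c : rank x (b :: c) =
  b * halfN x (size c).+1 +
  count (fun u => avoids x (b :: u) && (bval u < bval c)) (words (size c)).
Proof.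
have lt_cons h u : u \in words (size c) ->
    (bval (h :: u) < bval (b :: c)) = (h < b) || (h == b) && (bval u < bval c).
  by rewrite mem_words => /eqP u_c; rewrite ltn_bval_cons.
rewrite /rank /= (count_wordsS _ _ false) /=.
under eq_in_count => u u_c do rewrite lt_cons //.
under [X in _ + X]eq_in_count => u u_c do rewrite lt_cons //.
by case: b {lt_cons}; rewrite /= count_andb_const ?count_avoids_cons ?mul1n ?mul0n ?addn0.
Qed.

Lemma seqbit_cons b c i : i < size c -> seqbit (b :: c) i = seqbit c i.
Proof.
rewrite /seqbit /=; case: (size c) => // n.
by rewrite ltnS => /subSn ->.
Qed.

Lemma rank_sum_cons x b c :
  rank_sum x (b :: c) = rank_sum x c + head false c * halfN x (size c - x).
Proof.
case: c => [|h c]; first by rewrite /rank_sum !big_geq.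
rewrite /rank_sum /= big_mkcond big_nat_recr //= -big_mkcond /=.
have -> : seqbit [:: b, h & c] (size c) = h by rewrite /seqbit /= subSnn.
congr (_ + _); last by case: h; rewrite ?mul1n.
by apply: congr_big_nat => // i /andP [_ lt_i]; rewrite seqbit_cons // ltnS ltnW.
Qed.

Lemma rankE x c : avoids x c -> rank x c = head false c * halfN x (size c) + rank_sum x c.
Proof.
elim: c => [_ | b c IHc]; first by rewrite /rank_sum big_geq //= /rank /= andbF.
rewrite avoids_cons => /andP [avoids_c free_c].
have forbidden_lt :
    count (fun u => (avoids x u && (bval u < bval c)) && starts_forbidden x b u)
      (words (size c)) =
    head false c * count (fun u => avoids x u && starts_forbidden x b u) (words (size c)).
  rewrite -count_andb_const; apply: eq_in_count => u; rewrite mem_words => /eqP u_c.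
  case: (boolP (starts_forbidden x b u)) => [forbidden_u | _]; rewrite ?andbF // !andbT.
  by rewrite (ltn_bval_starts_forbidden u_c forbidden_u free_c).
have split_c := count_andb_split (fun u => avoids x u && (bval u < bval c))
  (starts_forbidden x b) (words (size c)).
rewrite forbidden_lt -/(rank x c) IHc // in split_c.
have count_forbidden := count_starts_forbidden x b (size c).
rewrite rank_cons rank_sum_cons /=.
under eq_count => u do rewrite avoids_cons andbAC.
by case: (head false c) split_c => /= split_c; lia.
Qed.

Lemma Ncount_nat x n : Ncount (Posz n) x = 2 * halfN x n.
Proof. by case: n => [|[|n]]; rewrite /Ncount /= ?card_Cset // halfN_le1. Qed.

Lemma Ncount_shift x i : Ncount (Posz i - Posz x + 1)%R x = 2 * halfN x (i.+1 - x).
Proof.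
case: (leqP i.+1 x) => [le_i_x | lt_x_i].
  by rewrite /Ncount ifT ?halfN_le1 //; lia.
have -> : (Posz i - Posz x + 1)%R = Posz (i.+1 - x) by lia.
exact: Ncount_nat.
Qed.

Theorem theorem2 (x m : nat) (hx : (1 <= x)%N) (hm : (2 <= m)%N)
  (c : m.-tuple bool) (hc : c \in Cset m x) :
  let S := (\sum_(0 <= i < m.-1 | bit c i) Ncount (Posz i - Posz x + 1)%R x)%N in
  (bit c m.-1 = false -> (2 * gpos x c = S)%N) /\
  (bit c m.-1 = true -> (2 * gpos x c = Ncount (Posz m) x + S)%N).
Proof.
move=> S.
have avoids_c : avoids x c by rewrite inE in hc.
have gposE : gpos x c = rank x c.
  rewrite /gpos /rank size_tuple.
  by apply: card_tuples_count => t; rewrite !inE.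
have SE : S = 2 * rank_sum x c.
  rewrite /S /rank_sum size_tuple big_distrr /=.
  by apply: eq_big => [i | i _]; rewrite ?Ncount_shift // /seqbit size_tuple.
have headE : bit c m.-1 = head false c by rewrite /bit subnn; case: (tval c).
rewrite headE gposE rankE // SE size_tuple Ncount_nat.
by case: (head false c); split=> // _; lia.
Qed.
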